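(* (a) Let $R$ be a commutative ring and $\mathfrak{a}\subseteq R$ an idempotent ideal. Then every $R$-module is of bounded small $\mathfrak{a}$-torsion. However, there exist a commutative ring $R$, an idempotent ideal $\mathfrak{a}$ and an $R$-module that is not of bounded large $\mathfrak{a}$-torsion; and there exist a commutative ring $R$ and an idempotent ideal $\mathfrak{a}$ such that the $R$-module $R$ is not of strongly bounded small $\mathfrak{a}$-torsion. (b) Let $R$ be a commutative ring and $\mathfrak{a}\subseteq R$ an ideal generated by idempotent elements. Then every $R$-module is of strongly bounded large $\mathfrak{a}$-torsion.
   Context: $\Gamma_\mathfrak{a}(M)=\{x\in M\mid \exists n\in\mathbb{N}:\mathfrak{a}^n\subseteq(0:_Rx)\}$, $\overline{\Gamma}_\mathfrak{a}(M)=\{x\in M\mid \mathfrak{a}\subseteq\sqrt{(0:_Rx)}\}$. An $R$-module $M$ is of strongly bounded large (resp. small) $\mathfrak{a}$-torsion if there is $n\in\mathbb{N}$ with $\mathfrak{a}^nM\cap\overline{\Gamma}_\mathfrak{a}(M)=0$ (resp. $\mathfrak{a}^nM\cap\Gamma_\mathfrak{a}(M)=0$), and of bounded large (resp. small) $\mathfrak{a}$-torsion if there is $n\in\mathbb{N}$ with $\mathfrak{a}^n\overline{\Gamma}_\mathfrak{a}(M)=0$ (resp. $\mathfrak{a}^n\Gamma_\mathfrak{a}(M)=0$). Idempotent means $\mathfrak{a}^2=\mathfrak{a}$. *)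

(* Ideals and submodules are Prop-valued predicates
   (membership in ideals of arbitrary rings is not decidable). *)
From HB Require Import structures.
From mathcomp Require Import all_boot all_order all_algebra.
Set Implicit Arguments. Unset Strict Implicit. Unset Printing Implicit Defensive.
Import GRing.Theory.
Local Open Scope ring_scope.

Section Defs.
Variable R : comPzRingType.

Definition is_ideal (a : R -> Prop) : Prop :=
  a 0 /\ (forall x y, a x -> a y -> a (x + y)) /\ (forall r x, a x -> a (r * x)).

Inductive ideal_gen (S : R -> Prop) : R -> Prop :=
| ig0 : ideal_gen S 0
| igS s : S s -> ideal_gen S s
| igM r x : ideal_gen S x -> ideal_gen S (r * x)
| igD x y : ideal_gen S x -> ideal_gen S y -> ideal_gen S (x + y).

Inductive prod_ideal (I J : R -> Prop) : R -> Prop :=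
| pi0 : prod_ideal I J 0
| piM i j : I i -> J j -> prod_ideal I J (i * j)
| piD x y : prod_ideal I J x -> prod_ideal I J y -> prod_ideal I J (x + y).

Fixpoint ideal_pow (a : R -> Prop) (n : nat) : R -> Prop :=
  match n with
  | 0 => fun _ => True
  | n'.+1 => prod_ideal (ideal_pow a n') a
  end.

Definition ideal_eq (a b : R -> Prop) : Prop := forall r, a r <-> b r.

Definition idempotent_ideal (a : R -> Prop) : Prop := ideal_eq (ideal_pow a 2) a.

Definition generated_by_idempotents (a : R -> Prop) : Prop :=
  exists S : R -> Prop, (forall e, S e -> e * e = e) /\ ideal_eq a (ideal_gen S).

Variable M : lmodType R.

Inductive ideal_smul (a : R -> Prop) : M -> Prop :=
| is0 : ideal_smul a 0
| isZ r m : a r -> ideal_smul a (r *: m)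
| isD x y : ideal_smul a x -> ideal_smul a y -> ideal_smul a (x + y).

Definition annih (x : M) : R -> Prop := fun r => r *: x = 0.

Definition Gamma (a : R -> Prop) (x : M) : Prop :=
  exists n : nat, forall r, ideal_pow a n r -> annih x r.

Definition Gamma_bar (a : R -> Prop) (x : M) : Prop :=
  forall r, a r -> exists n : nat, annih x (r ^+ n).

Definition strongly_bounded_large (a : R -> Prop) : Prop :=
  exists n : nat, forall x, ideal_smul (ideal_pow a n) x -> Gamma_bar a x -> x = 0.

Definition strongly_bounded_small (a : R -> Prop) : Prop :=
  exists n : nat, forall x, ideal_smul (ideal_pow a n) x -> Gamma a x -> x = 0.

Definition bounded_large (a : R -> Prop) : Prop :=
  exists n : nat, forall r x, ideal_pow a n r -> Gamma_bar a x -> r *: x = 0.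

Definition bounded_small (a : R -> Prop) : Prop :=
  exists n : nat, forall r x, ideal_pow a n r -> Gamma a x -> r *: x = 0.

End Defs.

(* Part (b): an element of an ideal generated by idempotents is fixed by an
   idempotent [e] of the ideal (idempotents combine via [e1 + e2 - e1 e2]),
   and so is every element of [a M]; if moreover a power of [e] kills [x],
   then [x = e^k x = 0].  Part (a): an idempotent ideal equals all its
   positive powers, so [a] already kills whatever some [a^n] kills.  The
   counterexamples live in the monoid ring over [Z] of the monoid
   [[0,1] ∪ {∞}] of rationals under addition truncated at 1; there the ideal
   generated by the [t^q - t^∞], [q > 0], is idempotent ([t^q] is the square
   of [t^(q/2)]), nil, and contains [t^1 - t^∞ <> 0], which it annihilates. *)
From HB Require Import structures.
From mathcomp Require Import all_boot all_order all_algebra.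
From mathcomp.multinomials Require Import monalg.
From mathcomp Require Import ring lra.
Set Implicit Arguments. Unset Strict Implicit. Unset Printing Implicit Defensive.
Import Order.TTheory GRing.Theory Num.Theory.
Local Open Scope ring_scope.

Section IdealTheory.
Variable R : comPzRingType.
Implicit Types (a I J S : R -> Prop) (e r w : R).

Lemma ideal_gen_is_ideal S : is_ideal (ideal_gen S).
Proof. by split; [exact: ig0 | split; [exact: igD | exact: igM]]. Qed.

Lemma prod_ideal_subr I a r : is_ideal a -> prod_ideal I a r -> a r.
Proof. by move=> [a0 [aD aM]]; elim=> [|i j _ /aM|x y _ ax _ ay] //; exact: aD. Qed.

Lemma prod_ideal_monol I J K r :
  (forall x, I x -> J x) -> prod_ideal I K r -> prod_ideal J K r.
Proof.
move=> IJ; elim=> [|i j Ii Kj|x y _ hx _ hy]; first exact: pi0.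
  by apply: piM => //; exact: IJ.
exact: piD.
Qed.

Lemma prod_ideal_mulr I J r x : (forall s i, I i -> I (s * i)) ->
  prod_ideal I J x -> prod_ideal I J (r * x).
Proof.
move=> IM; elim=> [|i j Ii Jj|x1 y _ hx _ hy].
- by rewrite mulr0; exact: pi0.
- by rewrite mulrA; apply: piM => //; exact: IM.
- by rewrite mulrDr; exact: piD.
Qed.

Lemma ideal_pow1 a : is_ideal a -> forall r, ideal_pow a 1 r <-> a r.
Proof.
move=> ia r; split; first exact: prod_ideal_subr.
by move=> ar; rewrite -(mul1r r); exact: piM.
Qed.

Lemma idempotent_ideal_pow a n r :
  is_ideal a -> idempotent_ideal a -> a r -> ideal_pow a n r.
Proof.
move=> ia a2 ar; elim: n r ar => // n IH r /a2 /=.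
apply: prod_ideal_monol => x /(ideal_pow1 ia); exact: IH.
Qed.

Lemma ideal_gen_idempotent S :
  (forall s, S s -> exists s1 s2, [/\ S s1, S s2 & s = s1 * s2]) ->
  idempotent_ideal (ideal_gen S).
Proof.
have iS := ideal_gen_is_ideal S.
move=> Ssplit r; split; first exact: prod_ideal_subr.
elim=> [|s /Ssplit [s1 [s2 [Ss1 Ss2 ->]]]|s x _ hx|x y _ hx _ hy].
- exact: pi0.
- by apply: piM; [apply/(ideal_pow1 iS) | idtac]; exact: igS.
- apply: prod_ideal_mulr hx => s' i hi.
  by apply: prod_ideal_mulr hi.
- exact: piD.
Qed.

Lemma ideal_gen_mul_eq0 S r w :
  (forall s, S s -> s * w = 0) -> ideal_gen S r -> r * w = 0.
Proof.
move=> Sw; elim=> [|s|s x _ hx|x y _ hx _ hy]; first exact: mul0r.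
- exact: Sw.
- by rewrite -mulrA hx mulr0.
- by rewrite mulrDl hx hy addr0.
Qed.

Definition nilpotent r := exists n, r ^+ n = 0.

Lemma nilpotentD x y : nilpotent x -> nilpotent y -> nilpotent (x + y).
Proof.
move=> [m xm] [n yn]; exists (m + n)%N; rewrite exprDn big1 // => i _.
have [ni|im] := leqP n i.
  by rewrite -(subnKC ni) exprD yn mul0r mulr0 mul0rn.
have mi : (m <= m + n - i)%N by rewrite -addnBA ?leq_addr // ltnW.
by rewrite -(subnKC mi) exprD xm !mul0r mul0rn.
Qed.

Lemma ideal_gen_nilpotent S r :
  (forall s, S s -> nilpotent s) -> ideal_gen S r -> nilpotent r.
Proof.
move=> Snil; elim=> [|s|s x _ [k xk]|x y _ hx _ hy].
- by exists 1%N; rewrite expr1.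
- exact: Snil.
- by exists k; rewrite exprMn xk mulr0.
- exact: nilpotentD.
Qed.

Lemma idempotent_bounded_small a (M : lmodType R) :
  is_ideal a -> idempotent_ideal a -> bounded_small M a.
Proof.
move=> ia a2; exists 1%N => r x /(ideal_pow1 ia) ar [k ak].
exact/ak/idempotent_ideal_pow.
Qed.

Lemma nil_idempotent_not_bounded_large a w :
  is_ideal a -> idempotent_ideal a -> (forall r, a r -> nilpotent r) ->
  a w -> w != 0 -> ~ bounded_large R^o a.
Proof.
move=> ia a2 anil aw w_neq0 [n an].
have one_large : Gamma_bar (M := R^o) a 1.
  move=> r /anil [k rk]; exists k.
  by rewrite /annih; change (r ^+ k * 1 = 0); rewrite mulr1.
have := an w 1 (idempotent_ideal_pow n ia a2 aw) one_large.
by change (w * 1 = 0 -> False); rewrite mulr1; exact/eqP.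
Qed.

Lemma idempotent_not_strongly_bounded_small a w :
  is_ideal a -> idempotent_ideal a -> (forall r, a r -> r * w = 0) ->
  a w -> w != 0 -> ~ strongly_bounded_small R^o a.
Proof.
move=> ia a2 aw0 aw w_neq0 [n an].
have w_small : Gamma (M := R^o) a w.
  by exists 1%N => r /(ideal_pow1 ia) /aw0.
have w_an : ideal_smul (M := R^o) (ideal_pow a n) w.
  by rewrite -[w]mulr1; exact: (isZ (M := R^o) 1 (idempotent_ideal_pow n ia a2 aw)).
by move/eqP: w_neq0; apply; exact: an.
Qed.

Definition idem_join e1 e2 := e1 + e2 - e1 * e2.

Section IdemJoin.
Variables e1 e2 : R.
Hypotheses (e1_idem : e1 * e1 = e1) (e2_idem : e2 * e2 = e2).

Lemma idem_join_mull : idem_join e1 e2 * e1 = e1.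
Proof.
rewrite /idem_join; transitivity (e1 * e1 + e2 * e1 - (e1 * e1) * e2); first ring.
by rewrite e1_idem; ring.
Qed.

Lemma idem_join_mulr : idem_join e1 e2 * e2 = e2.
Proof.
rewrite /idem_join; transitivity (e1 * e2 + e2 * e2 - e1 * (e2 * e2)); first ring.
by rewrite e2_idem; ring.
Qed.

Lemma idem_join_idem : idem_join e1 e2 * idem_join e1 e2 = idem_join e1 e2.
Proof.
by rewrite {2}/idem_join mulrDr mulrN mulrDr mulrA idem_join_mull idem_join_mulr.
Qed.

Lemma ideal_gen_idem_join S :
  ideal_gen S e1 -> ideal_gen S e2 -> ideal_gen S (idem_join e1 e2).
Proof.
move=> S1 S2; rewrite /idem_join -mulN1r.
by apply: igD; [exact: igD | apply: igM; exact: igM].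
Qed.

End IdemJoin.

Lemma ideal_gen_idem_unit S r : (forall e, S e -> e * e = e) ->
  ideal_gen S r -> exists e, [/\ ideal_gen S e, e * e = e & e * r = r].
Proof.
move=> Sidem; elim=> [|s Ss|s x _ [e [Se ee ex]]|x y _ [e1 [S1 e11 ex]] _ [e2 [S2 e22 ey]]].
- by exists 0; rewrite mulr0; split => //; exact: ig0.
- by exists s; split; [exact: igS | exact: Sidem | exact: Sidem].
- by exists e; split => //; rewrite mulrCA ex.
- exists (idem_join e1 e2); split; [exact: ideal_gen_idem_join | exact: idem_join_idem |].
  by rewrite mulrDr -[in X in X + _]ex -[in X in _ + X]ey !mulrA
    (idem_join_mull e2 e11) (idem_join_mulr e1 e22) ex ey.
Qed.

Variable M : lmodType R.

Lemma ideal_smul_monol I J (x : M) :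
  (forall r, I r -> J r) -> ideal_smul I x -> ideal_smul J x.
Proof.
move=> IJ; elim=> [|r m Ir|x1 y _ hx _ hy]; first exact: is0.
  by apply: isZ; exact: IJ.
exact: isD.
Qed.

Lemma ideal_smul_idem_unit S (x : M) : (forall e, S e -> e * e = e) ->
  ideal_smul (ideal_gen S) x -> exists e, [/\ ideal_gen S e, e * e = e & e *: x = x].
Proof.
move=> Sidem; elim=> [|r m /(ideal_gen_idem_unit Sidem) [e [Se ee er]]|].
- by exists 0; rewrite mulr0 scaler0; split => //; exact: ig0.
- by exists e; split => //; rewrite scalerA er.
move=> x1 y _ [e1 [S1 e11 ex]] _ [e2 [S2 e22 ey]].
exists (idem_join e1 e2); split; [exact: ideal_gen_idem_join | exact: idem_join_idem |].
by rewrite scalerDr -[in X in X + _]ex -[in X in _ + X]ey !scalerA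
  (idem_join_mull e2 e11) (idem_join_mulr e1 e22) ex ey.
Qed.

Lemma idem_fixed_expr e k (x : M) : e *: x = x -> e ^+ k *: x = x.
Proof. by move=> ex; elim: k => [|k IH]; rewrite ?scale1r // exprSr -scalerA ex. Qed.

Lemma idempotent_gen_strongly_bounded_large a :
  is_ideal a -> generated_by_idempotents a -> strongly_bounded_large M a.
Proof.
move=> ia [S [Sidem aS]]; exists 1%N => x ax x_large.
have /(ideal_smul_idem_unit Sidem) [e [Se _ ex]] : ideal_smul (ideal_gen S) x.
  by apply: ideal_smul_monol ax => r /(ideal_pow1 ia) /aS.
have [k ek] := x_large e (proj2 (aS e) Se).
by rewrite -(idem_fixed_expr k ex).
Qed.

End IdealTheory.

(* [[0,1] ∪ {∞}] under truncated addition, with [∞] encoded as the rational 2. *)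
Definition tcap (x : rat) : rat := if x <= 1 then x else 2.
Definition tcapped (x : rat) : bool := (0 <= x) && ((x <= 1) || (x == 2)).
Record tmon := Tmon { tval : rat; tvalP : tcapped tval }.
HB.instance Definition _ := [isSub for tval].
HB.instance Definition _ := [Choice of tmon by <:].

Lemma tcapped_cap x : 0 <= x -> tcapped (tcap x).
Proof. by rewrite /tcap /tcapped => x_ge0; case: ifP => x1; rewrite ?x_ge0 ?x1 //=; lra. Qed.

Lemma tcap_addl x c : 0 <= c -> 0 <= x -> tcap (tcap x + c) = tcap (x + c).
Proof.
rewrite /tcap => c_ge0 x_ge0; case: (ifP (x <= 1)) => // /negbT; rewrite -ltNge => x1.
by rewrite !ifF //; apply/negbTE; rewrite -ltNge; lra.
Qed.

Lemma tval_ge0 p : 0 <= tval p.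
Proof. by case: p => v /= /andP[]. Qed.

Lemma tvalK p : tcap (tval p) = tval p.
Proof. by case: p => v /= /andP[_ /orP[v1|/eqP ->]]; rewrite /tcap ?v1. Qed.

Definition tmul p q := Tmon (tcapped_cap (addr_ge0 (tval_ge0 p) (tval_ge0 q))).
Definition t0 := @Tmon 0 isT.
Definition t1 := @Tmon 1 isT.
Definition tinf := @Tmon 2 isT.

Lemma tmulA : associative tmul.
Proof.
move=> p q r; apply: val_inj => /=.
rewrite tcap_addl ?tval_ge0 ?addr_ge0 ?tval_ge0 // [tval p + _]addrC.
rewrite tcap_addl ?tval_ge0 ?addr_ge0 ?tval_ge0 //; congr tcap; ring.
Qed.

Lemma tmulC : commutative tmul.
Proof. by move=> p q; apply: val_inj; rewrite /= addrC. Qed.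

Lemma tmul1 : left_id t0 tmul.
Proof. by move=> p; apply: val_inj; rewrite /= add0r tvalK. Qed.

Lemma tmulr1 : right_id t0 tmul.
Proof. by move=> p; rewrite tmulC tmul1. Qed.

Lemma tmul_eq1 p q : tmul p q = t0 -> p = t0 /\ q = t0.
Proof.
move/(congr1 tval); rewrite /= /tcap.
have p_ge0 := tval_ge0 p; have q_ge0 := tval_ge0 q.
by case: ifP => _ pq; [split; apply: val_inj => /=; lra | exfalso; lra].
Qed.

HB.instance Definition _ := Choice_isMonomialDef.Build tmon tmulA tmul1 tmulr1 tmul_eq1.
HB.instance Definition _ := MonomialDef_isConomialDef.Build tmon tmulC.

Lemma tmul_inf p : tmul p tinf = tinf.
Proof.
apply: val_inj; rewrite /= /tcap ifF //.
by apply/negbTE; rewrite -ltNge; have := tval_ge0 p; lra.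
Qed.

Lemma tval_iter p k : tval (iter k (tmul p) p) = tcap (k.+1%:R * tval p).
Proof.
elim: k => [|k IH] /=; first by rewrite mul1r tvalK.
rewrite IH addrC tcap_addl ?tval_ge0 ?mulr_ge0 ?tval_ge0 //.
by rewrite [in RHS]mulrS mulrDl mul1r addrC.
Qed.

Lemma tmul_iter_inf p : 0 < tval p -> exists k, iter k (tmul p) p = tinf.
Proof.
move=> p_gt0; set k := Num.Def.archi_bound (tval p)^-1.
have : (tval p)^-1 < k%:R by apply: archi_boundP; rewrite invr_ge0 ltW.
rewrite -(ltr_pM2r p_gt0) mulVf ?lt0r_neq0 // => pk.
clearbody k; exists k; apply: val_inj => /=; rewrite tval_iter /tcap ifF //.
by apply/negbTE; rewrite -ltNge -addn1 natrD mulrDl mul1r; lra.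
Qed.

Definition tring := {malg int[tmon]}.

Definition mono q : tring := << q >>.

(* [gen q] stands for [t^q] modulo the idempotent [t^∞]. *)
Definition gen q := mono q - mono tinf.

Lemma monoM p q : mono p * mono q = mono (tmul p q).
Proof. by rewrite /mono malgM_def fgmulUU mulr1. Qed.

Lemma genM p q : gen p * gen q = gen (tmul p q).
Proof.
have mono_inf r : mono r * mono tinf = mono tinf by rewrite monoM tmul_inf.
rewrite /gen mulrBl !mulrBr !mono_inf [mono tinf * _]mulrC mono_inf monoM.
by rewrite subrr subr0.
Qed.

Lemma gen_inf : gen tinf = 0.
Proof. exact: subrr. Qed.

Definition gen_pos (r : tring) : Prop := exists q, 0 < tval q /\ r = gen q.
Definition gen_ideal : tring -> Prop := ideal_gen gen_pos.

Lemma gen_pos_split s :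
  gen_pos s -> exists s1 s2, [/\ gen_pos s1, gen_pos s2 & s = s1 * s2].
Proof.
move=> [q [q_gt0 ->]].
have halfP : tcapped (tval q / 2).
  have /andP[_ /orP[q1|/eqP q2]] := tvalP q;
    by rewrite /tcapped; apply/andP; split; try (apply/orP; left); lra.
pose h := Tmon halfP.
have h_gt0 : 0 < tval h by rewrite /=; lra.
exists (gen h), (gen h); split; try by exists h.
rewrite genM; congr gen; apply: val_inj; rewrite /= -[LHS]tvalK; congr tcap; lra.
Qed.

Lemma gen_pos_nilpotent s : gen_pos s -> nilpotent s.
Proof.
move=> [q [q_gt0 ->]]; have [k qk] := tmul_iter_inf q_gt0.
exists k.+1; rewrite -gen_inf -qk.
by elim: k {qk} => [|k IH]; rewrite ?expr1 // exprS IH genM.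
Qed.

Lemma gen_t1_neq0 : gen t1 != 0.
Proof.
apply/eqP => /(congr1 (mcoeff t1)); rewrite mcoeffB /mono !mcoeffU1 eqxx.
have -> : (tinf == t1) = false by apply/eqP => /(congr1 tval).
by rewrite mcoeff0 subr0 => /eqP; rewrite oner_eq0.
Qed.

Lemma gen_ideal_t1 : gen_ideal (gen t1).
Proof. by apply: igS; exists t1; split => //=; lra. Qed.

Lemma gen_ideal_idempotent : idempotent_ideal gen_ideal.
Proof. exact/ideal_gen_idempotent/gen_pos_split. Qed.

Lemma gen_ideal_nilpotent r : gen_ideal r -> nilpotent r.
Proof. exact/ideal_gen_nilpotent/gen_pos_nilpotent. Qed.

Lemma gen_ideal_mul_t1 r : gen_ideal r -> r * gen t1 = 0.
Proof.
apply: ideal_gen_mul_eq0 => _ [q [q_gt0 ->]]; rewrite genM -gen_inf; congr gen.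
by apply: val_inj; rewrite /= /tcap ifF //; apply/negbTE; rewrite -ltNge; lra.
Qed.

Theorem proposition7p5 :
  ((forall (R : comPzRingType) (a : R -> Prop),
      is_ideal a -> idempotent_ideal a ->
      forall M : lmodType R, bounded_small M a)
   /\ (exists (R : comPzRingType) (a : R -> Prop) (M : lmodType R),
         is_ideal a /\ idempotent_ideal a /\ ~ bounded_large M a)
   /\ (exists (R : comPzRingType) (a : R -> Prop),
         is_ideal a /\ idempotent_ideal a /\ ~ strongly_bounded_small R^o a))
  /\
  (forall (R : comPzRingType) (a : R -> Prop),
      is_ideal a -> generated_by_idempotents a ->
      forall M : lmodType R, strongly_bounded_large M a).
Proof.
have ia := ideal_gen_is_ideal gen_pos.
have a2 := gen_ideal_idempotent.
split; last by move=> R a ia' aS M; exact: idempotent_gen_strongly_bounded_large.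
split; first by move=> R a ia' a2' M; exact: idempotent_bounded_small.
split.
- exists (tring : comPzRingType), gen_ideal, tring^o; do 2!split=> //.
  exact: (nil_idempotent_not_bounded_large ia a2 gen_ideal_nilpotent
            gen_ideal_t1 gen_t1_neq0).
- exists (tring : comPzRingType), gen_ideal; do 2!split=> //.
  exact: (idempotent_not_strongly_bounded_small ia a2 gen_ideal_mul_t1
            gen_ideal_t1 gen_t1_neq0).
Qed.
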